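(* Let $r\ge 2$ and let $G$ be a graph on $n$ vertices. If $e(G)\ge e(T_r(n))$, then $\lambda(G)\ge \lambda(T_r(n))$. Moreover, if $e(G)\ge e(T_r(n))$ and $\lambda(G)=\lambda(T_r(n))$, then $G\in\mathcal{F}_r(n)$. Conversely, every $G\in\mathcal{F}_r(n)$ satisfies $e(G)=e(T_r(n))$ and $\lambda(G)=\lambda(T_r(n))$.
   Context: All graphs are finite and simple; $e(G)$ is the number of edges and $\lambda(G)$ the spectral radius of the adjacency matrix. $T_r(n)$ is the complete $r$-partite graph on $n$ vertices with part sizes differing by at most one. The family $\mathcal{F}_r(n)$: write $n=ra+b$ with $0\le b<r$ and $a=\lfloor n/r\rfloor$. If $b=0$, $\mathcal{F}_r(n)$ is the set of all $(r-1)a$-regular graphs on $n$ vertices. If $1\le b<r$, $\mathcal{F}_r(n)$ is the set of all graphs $G$ on $n$ vertices having a partition $V(G)=X\sqcup Y$ with $|X|=b(a+1)$, $|Y|=(r-b)a$, such that every vertex of $X$ is adjacent to every vertex of $Y$, $G[X]$ is $(b-1)(a+1)$-regular, and $G[Y]$ is $(r-b-1)a$-regular. *)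

From mathcomp Require Import all_boot all_order all_algebra all_field.
Set Implicit Arguments. Unset Strict Implicit. Unset Printing Implicit Defensive.
Import Order.TTheory GRing.Theory Num.Theory.

Local Open Scope ring_scope.

Definition simple_graph n (G : rel 'I_n) : Prop := symmetric G /\ irreflexive G.

Definition nedges n (G : rel 'I_n) : nat :=
  #|[set p : 'I_n * 'I_n | G p.1 p.2 && (p.1 < p.2)%N]|.

Definition adjmx n (G : rel 'I_n) : 'M[algC]_n := \matrix_(i, j) (G i j)%:R.

Definition rootsC (p : {poly algC}) : seq algC := sval (closed_field_poly_normal p).

Definition spectral_radius n (A : 'M[algC]_n) : algC :=
  \big[Num.max/0]_(z <- rootsC (char_poly A)) `|z|.

Definition lambda n (G : rel 'I_n) : algC := spectral_radius (adjmx G).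

(* Turan graph T_r(n): vertex i lies in part (i mod r); parts have sizes
   floor(n/r) or ceil(n/r); adjacent iff in different parts. *)
Definition turan (r n : nat) : rel 'I_n := fun i j => (i %% r != j %% r)%N.
Arguments turan r n : clear implicits.

Definition deg_in n (G : rel 'I_n) (S : {set 'I_n}) (x : 'I_n) : nat :=
  #|[set y in S | G x y]|.

Definition regular_in n (G : rel 'I_n) (S : {set 'I_n}) (d : nat) : Prop :=
  forall x, x \in S -> deg_in G S x = d.

Definition family_F (r n : nat) (G : rel 'I_n) : Prop :=
  let a := (n %/ r)%N in let b := (n %% r)%N in
  if b == 0%N then regular_in G setT ((r - 1) * a)%N
  else exists X : {set 'I_n},
    [/\ #|X| = (b * a.+1)%N, #|~: X| = ((r - b) * a)%N,
        (forall x y, x \in X -> y \in ~: X -> G x y),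
        regular_in G X ((b - 1) * a.+1)%N &
        regular_in G (~: X) ((r - b - 1) * a)%N].

From mathcomp Require Import all_boot all_order all_algebra all_field.
From mathcomp Require Import ring lra zify.
Set Implicit Arguments. Unset Strict Implicit. Unset Printing Implicit Defensive.
Import Order.TTheory GRing.Theory Num.Theory.

(* Let c(v) = nondeg G v be the number of non-neighbours of v, v included,
   a = n %/ r and b = n %% r.  Then 2 e(G) = n^2 - sum_v c(v), so e(G) >=
   e(T_r(n)) means sum_v c(v) <= n a + b (a + 1), with equality for T_r(n),
   where c(v) is the size of the part of v.  Let mu = lambda(T_r(n)); it is the root of
   sum_v 1 / (mu + c(v)) = 1 taken over T_r(n).  Test G with y_v = 1 / (mu + c(v)):
   with A the adjacency matrix and Y = sum_v y_v,
     y A y^T - mu |y|^2 = Y (Y - 1) + 1/2 sum_{v, w non-adjacent} (y_v - y_w)^2,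
   and comparing x |-> 1 / (mu + x) with its secant through a and a + 1 gives
   Y >= 1.  Hence lambda(G) >= mu by the Rayleigh bound.  Equality forces Y = 1,
   c(v) in {a, a + 1} and c constant on non-adjacent pairs, which is exactly
   the structure of F_r(n); conversely for such G the vector y is a positive
   eigenvector for mu, so lambda(G) = mu. *)

(** * Spectral radius *)

Section SpectralRadius.

Local Open Scope ring_scope.

Variable n : nat.
Implicit Types (A : 'M[algC]_n) (z c : algC).

Lemma mem_rootsC (p : {poly algC}) z : p != 0 -> (z \in rootsC p) = root p z.
Proof.
move=> p_neq0; rewrite /rootsC; case: closed_field_poly_normal => s /= p_def.
rewrite rootE [in p.[z]]p_def hornerZ horner_prod mulf_eq0 lead_coef_eq0 (negbTE p_neq0) /=.
rewrite prodf_seq_eq0; apply/idP/idP => [zs | /hasP [w ws]]; last first.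
  by rewrite hornerXsubC subr_eq0 => /eqP ->.
by apply/hasP; exists z; rewrite //= hornerXsubC subrr.
Qed.

Lemma mem_rootsC_char_poly A z : (z \in rootsC (char_poly A)) = eigenvalue A z.
Proof.
by rewrite mem_rootsC ?monic_neq0 ?char_poly_monic // -eigenvalue_root_char.
Qed.

Lemma eigenvalue_le_spectral_radius A z :
  eigenvalue A z -> `|z| <= spectral_radius A.
Proof.
rewrite -mem_rootsC_char_poly /spectral_radius.
elim: (rootsC _) => [|w s IHs] //; rewrite inE big_cons.
rewrite comparable_le_max ?real_comparable ?bigmax_real ?normr_real //.
  by case/orP => [/eqP -> | /IHs ->]; rewrite ?lexx ?orbT.
by move=> ? _; apply: normr_real.
Qed.

Lemma spectral_radius_le A c : 0 <= c ->
  (forall z, eigenvalue A z -> `|z| <= c) -> spectral_radius A <= c.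
Proof.
move=> c_ge0 le_c; rewrite /spectral_radius.
have : {in rootsC (char_poly A), forall z, `|z| <= c}.
  by move=> z; rewrite mem_rootsC_char_poly; apply: le_c.
elim: (rootsC _) => [|w s IHs] le_s; first by rewrite big_nil.
rewrite big_cons comparable_ge_max ?real_comparable ?bigmax_real ?normr_real //.
  by rewrite le_s ?mem_head ?IHs // => z zs; rewrite le_s // inE zs orbT.
by move=> ? _; apply: normr_real.
Qed.

Local Open Scope sesquilinear_scope.

Lemma hermitian_rayleigh_le A (u : 'rV[algC]_n) : A \is hermsymmx ->
  (u *m A *m u^t*) 0 0 <= spectral_radius A * (u *m u^t*) 0 0.
Proof.
move=> A_herm; set P := spectralmx A; set d := spectral_diag A.
have P_unitary : P \is unitarymx by apply: spectral_unitarymx.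
have PPt : P *m P^t* = 1%:M by apply/unitarymxP.
have PtP : P^t* *m P = 1%:M by apply: mulmx1C.
have A_diag : A = P^t* *m diag_mx d *m P.
  by rewrite -invmx_unitary //; apply/orthomx_spectralP/hermitian_normalmx.
have d_real : d \is a realmx := hermitian_spectral_diag_real A_herm.
clearbody P d.
have d_eigen j : eigenvalue A (d 0 j).
  apply/eigenvalueP; exists (row j P).
    rewrite -row_mul A_diag !mulmxA PPt mul1mx mul_diag_mx.
    by apply/rowP => k; rewrite !mxE.
  apply: contraTneq isT => Pj0.
  have /rowP /(_ j) := congr1 (row j) PPt.
  by rewrite row_mul Pj0 mul0mx !mxE eqxx /= => /eqP; rewrite eq_sym oner_eq0.
set w := u *m P^t*.
have -> : u *m A *m u^t* = w *m diag_mx d *m w^t*.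
  by rewrite A_diag /w !trmx_mul !map_mxM trmxCK !mulmxA.
have -> : u *m u^t* = w *m w^t*.
  by rewrite /w trmx_mul map_mxM trmxCK mulmxA -(mulmxA u) PtP mulmx1.
clearbody w; rewrite mul_mx_diag !mxE mulr_sumr; apply: ler_sum => j _.
rewrite !mxE mulrAC [X in X <= _]mulrC ler_wpM2r ?mul_conjC_ge0 //.
apply: le_trans (eigenvalue_le_spectral_radius (d_eigen j)).
exact: real_ler_norm (mxOverP d_real 0 j).
Qed.

Local Close Scope sesquilinear_scope.

Lemma eigenvalue_norm_le_pos_eigenvector A (x : 'rV[algC]_n) mu :
  (forall i j, 0 <= A i j) -> (forall i, 0 < x 0 i) -> x *m A = mu *: x ->
  forall z, eigenvalue A z -> `|z| <= mu.
Proof.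
move=> A_ge0 x_gt0 xA z /eigenvalueP [v vA v_neq0].
have /matrix0Pn [i [j]] := v_neq0; rewrite [i]ord1 {i} => vj_neq0.
pose f i := `|v 0 i| / x 0 i.
have f_real i : f i \is Num.real by apply/ger0_real/divr_ge0/ltW.
case: (@real_arg_maxP _ _ j predT f isT (fun i _ => f_real i)) => k _ f_max.
set t := f k in f_max.
have v_le i : `|v 0 i| <= t * x 0 i by have := f_max i isT; rewrite /= /f ler_pdivrMr.
have vk : `|v 0 k| = t * x 0 k by rewrite /t /f divfK ?gt_eqF.
have vk_gt0 : 0 < `|v 0 k|.
  by rewrite vk mulr_gt0 // (lt_le_trans _ (f_max j isT)) ?divr_gt0 ?normr_gt0.
have zv : `|z| * `|v 0 k| = `|\sum_i v 0 i * A i k|.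
  by have /rowP /(_ k) := vA; rewrite !mxE => ->; rewrite normrM.
have /rowP /(_ k) := xA; rewrite !mxE => mux.
rewrite -(ler_pM2r vk_gt0) zv (le_trans (ler_norm_sum _ _ _)) //.
apply: le_trans (_ : _ <= \sum_i t * (x 0 i * A i k)) _.
  by apply: ler_sum => i _; rewrite normrM (ger0_norm (A_ge0 _ _)) mulrA ler_wpM2r.
by rewrite -mulr_sumr mux vk mulrCA.
Qed.

Lemma spectral_radius_pos_eigenvector A (x : 'rV[algC]_n) mu : (0 < n)%N ->
  (forall i j, 0 <= A i j) -> (forall i, 0 < x 0 i) -> x *m A = mu *: x ->
  spectral_radius A = mu.
Proof.
move=> n_gt0 A_ge0 x_gt0 xA.
have mu_eigen : eigenvalue A mu.
  apply/eigenvalueP; exists x => //; apply: contraTneq isT => x0.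
  by have := x_gt0 (Ordinal n_gt0); rewrite x0 mxE ltxx.
have le_mu := eigenvalue_norm_le_pos_eigenvector A_ge0 x_gt0 xA.
have mu_ge0 : 0 <= mu := le_trans (normr_ge0 mu) (le_mu _ mu_eigen).
apply/eqP; rewrite eq_le spectral_radius_le //=.
by rewrite -{1}(ger0_norm mu_ge0) eigenvalue_le_spectral_radius.
Qed.

End SpectralRadius.

Lemma sum_nat_mem (T : finType) (A : {pred T}) : \sum_(x : T) (x \in A) = #|A|.
Proof.
by apply/esym; rewrite -sum1_card big_mkcond; apply: eq_bigr => x _; case: (x \in A).
Qed.

(** * Degrees and the Turán graph *)

Section Degrees.

Variables (n : nat) (G : rel 'I_n).

Definition deg := deg_in G setT.

(* v counts as one of its own non-neighbours *)
Definition nondeg v := #|[set w | ~~ G v w]|.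

Lemma deg_add_nondeg v : deg v + nondeg v = n.
Proof.
rewrite -[RHS](card_ord n) -(cardsC [set w | G v w]); congr (_ + _).
  by apply: eq_card => w; rewrite !inE.
by apply: eq_card => w; rewrite !inE.
Qed.

Lemma deg_in_setC (X : {set 'I_n}) v : deg v = deg_in G X v + deg_in G (~: X) v.
Proof.
rewrite /deg /deg_in -(cardsID X); congr (_ + _).
  by apply: eq_card => w; rewrite !inE andbC.
by apply: eq_card => w; rewrite !inE andbC.
Qed.

Lemma deg_in_complete (A : {set 'I_n}) v :
  {in A, forall w, G v w} -> deg_in G A v = #|A|.
Proof.
by move=> GA; apply: eq_card => w; rewrite inE andb_idr //; apply: GA.
Qed.

Hypothesis G_simple : simple_graph G.

Lemma nondeg_gt0 v : 0 < nondeg v.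
Proof. by rewrite card_gt0; apply/set0Pn; exists v; rewrite inE G_simple.2. Qed.

Lemma handshake : (nedges G).*2 = \sum_v deg v.
Proof.
have [G_sym G_irr] := G_simple.
have edgesE : nedges G = \sum_v \sum_w (G v w && (v < w)).
  by rewrite /nedges pair_bigA -sum1_card big_mkcond; apply: eq_bigr => -[v w] _; rewrite inE.
have degE v : deg v = \sum_w (G v w && (v < w)) + \sum_w (G w v && (w < v)).
  rewrite -big_split /deg /deg_in -sum1_card big_mkcond; apply: eq_bigr => w _ /=.
  rewrite !inE /= G_sym; case: (ltngtP v w) => [_|_|/val_inj ->]; rewrite ?G_irr //.
  1,2: by case: (G w v).
by rewrite (eq_bigr _ (fun v _ => degE v)) big_split /= [X in _ + X]exchange_big -edgesE addnn.
Qed.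

Lemma nedges_double_add_nondeg : (nedges G).*2 + \sum_v nondeg v = n * n.
Proof.
rewrite handshake -big_split /= (eq_bigr (fun _ => n)) => [|v _].
  by rewrite sum_nat_const card_ord.
exact: deg_add_nondeg.
Qed.

End Degrees.

Lemma leq_nedges_sum_nondeg n (G H : rel 'I_n) : simple_graph G -> simple_graph H ->
  (nedges H <= nedges G) = (\sum_v nondeg G v <= \sum_v nondeg H v).
Proof.
move=> /nedges_double_add_nondeg G_sum /nedges_double_add_nondeg H_sum.
by apply/idP/idP; lia.
Qed.

Lemma eq_nedges n (G H : rel 'I_n) : G =2 H -> nedges G = nedges H.
Proof. by move=> GH; apply: eq_card => p; rewrite !inE GH. Qed.

Lemma simple_graph_le1_eq2 n (G H : rel 'I_n) : n <= 1 ->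
  simple_graph G -> simple_graph H -> G =2 H.
Proof.
move=> n_le1 [_ G_irr] [_ H_irr] u v.
have -> : u = v by apply: ord_inj; have := ltn_ord u; have := ltn_ord v; lia.
by rewrite G_irr H_irr.
Qed.

Lemma card_modn_lt r m j : 0 < r -> j <= r ->
  #|[set u : 'I_m | u %% r < j]| = m %/ r * j + minn (m %% r) j.
Proof.
move=> r_gt0 le_jr; rewrite -sum1dep_card big_mkcond /=.
rewrite -(big_mkord xpredT (fun u => if u %% r < j then 1 else 0)).
elim: m => [|m IHm]; first by rewrite big_geq // div0n mod0n min0n.
rewrite big_nat_recr //= IHm divnS // modnS.
have := divn_eq m r; have := ltn_pmod m r_gt0.
have [r_dvd | _] := boolP (r %| m.+1); last by case: (ltnP (m %% r) j); lia.
by have := divnK r_dvd; rewrite divnS // r_dvd /=; case: (ltnP (m %% r) j); lia.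
Qed.

Lemma card_modn_eq r m i : i < r ->
  #|[set u : 'I_m | u %% r == i]| = m %/ r + (i < m %% r).
Proof.
move=> lt_ir; have r_gt0 : 0 < r by lia.
set lt_i := [set u : 'I_m | u %% r < i]; set lt_iS := [set u : 'I_m | u %% r < i.+1].
have sub_lt : lt_i \subset lt_iS by apply/subsetP => u; rewrite !inE; lia.
have -> : [set u : 'I_m | u %% r == i] = lt_iS :\: lt_i.
  by apply/setP => u; rewrite !inE; lia.
have := cardsID lt_i lt_iS; rewrite (setIidPr sub_lt) !card_modn_lt //; lia.
Qed.

Lemma turan_simple r n : simple_graph (turan r n).
Proof. by split => [u v | u]; rewrite /turan ?eqxx // eq_sym. Qed.

(* The non-adjacency data of T_r(n): every vertex misses exactly its own part,
   and X is the union of the n %% r parts of size n %/ r + 1. *)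
Definition nondeg_profile r n (G : rel 'I_n) (X : {set 'I_n}) :=
  [/\ #|X| = n %% r * (n %/ r).+1,
      forall v : 'I_n, nondeg G v = n %/ r + (v \in X) &
      forall v w : 'I_n, ~~ G v w -> (v \in X) = (w \in X)].

Lemma turan_nondeg_profile r n : 0 < r ->
  nondeg_profile r (turan r n) [set v : 'I_n | v %% r < n %% r].
Proof.
move=> r_gt0; split.
- rewrite card_modn_lt //; last exact/ltnW/ltn_pmod.
  by rewrite minnn mulnS addnC mulnC.
- move=> v; rewrite inE -card_modn_eq ?ltn_pmod //.
  by apply: eq_card => w; rewrite !inE /turan negbK eq_sym.
- by move=> v w; rewrite /turan negbK !inE => /eqP ->.
Qed.

Lemma eq_nondeg_profile r n (G H : rel 'I_n) X : G =2 H ->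
  nondeg_profile r G X -> nondeg_profile r H X.
Proof.
move=> GH [cardX nondegE sideE]; split => // [v | v w].
  by rewrite -nondegE; apply: eq_card => w; rewrite !inE GH.
by rewrite -GH; apply: sideE.
Qed.

Lemma sum_nondeg_profile r n (G : rel 'I_n) X : nondeg_profile r G X ->
  \sum_v nondeg G v = n * (n %/ r) + n %% r * (n %/ r).+1.
Proof.
case=> cardX nondegE _; rewrite (eq_bigr _ (fun v _ => nondegE v)) big_split /=.
by rewrite sum_nat_const card_ord sum_nat_mem cardX.
Qed.

Lemma nondeg_profile_of r n (G : rel 'I_n) :
  (forall v, nondeg G v = n %/ r \/ nondeg G v = (n %/ r).+1) ->
  \sum_v nondeg G v = n * (n %/ r) + n %% r * (n %/ r).+1 ->
  (forall v w, ~~ G v w -> nondeg G v = nondeg G w) ->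
  nondeg_profile r G [set v | nondeg G v == (n %/ r).+1].
Proof.
move=> nondeg_ab sumE nondeg_nonadj; set X := [set v | _].
have nondegE v : nondeg G v = n %/ r + (v \in X).
  rewrite inE; case: (nondeg_ab v) => ->; last by rewrite eqxx addn1.
  by rewrite (ltn_eqF (ltnSn _)) addn0.
split => // [| v w /nondeg_nonadj]; last by rewrite !inE => ->.
move: sumE; rewrite (eq_bigr _ (fun v _ => nondegE v)) big_split /=.
by rewrite sum_nat_const card_ord sum_nat_mem => /addnI.
Qed.

Section FamilyF.

Variables (r n : nat) (G : rel 'I_n).
Hypotheses (r_gt0 : 0 < r) (G_simple : simple_graph G).

Lemma nondeg_profile_family_F X : nondeg_profile r G X -> family_F r G.
Proof.
case=> cardX nondegE sideE; have [G_sym _] := G_simple; rewrite /family_F.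
have := divn_eq n r; have := ltn_pmod n r_gt0.
set a := n %/ r in cardX nondegE *; set b := n %% r in cardX nondegE *.
have degE v : deg G v = n - nondeg G v by have := deg_add_nondeg G v; lia.
case: ifP => [/eqP b0 | b_neq0] lt_br n_eq.
  have X0 : X = set0 by apply/cards0_eq; rewrite cardX b0.
  by move=> v _; rewrite -/(deg G v) degE nondegE X0 inE mulnBl mul1n /=; lia.
have cross x y : x \in X -> y \in ~: X -> G x y.
  by move=> xX; rewrite inE => yX; apply: contraNT yX => /sideE <-.
have cardXC : #|~: X| = (r - b) * a.
  have := cardsC X; rewrite card_ord cardX mulnBl mulnS; lia.
exists X; split => // [x xX | y yX].
  have := deg_in_setC G (~: X) x; rewrite setCK deg_in_complete => [|w]; last exact: cross.
  by rewrite -/(deg G x) degE nondegE xX cardXC !mulnBl mul1n mulnS; lia.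
have yX' : y \notin X by rewrite inE in yX.
have := deg_in_setC G X y; rewrite deg_in_complete => [|w wX]; last by rewrite G_sym cross.
by rewrite -/(deg G y) degE nondegE (negbTE yX') cardX !mulnBl mul1n mulnS; lia.
Qed.

Lemma family_F_nondeg_profile : family_F r G -> exists X, nondeg_profile r G X.
Proof.
have [G_sym _] := G_simple; rewrite /family_F /nondeg_profile.
have := divn_eq n r; have := ltn_pmod n r_gt0.
set a := n %/ r; set b := n %% r.
have nondegE v : nondeg G v = n - deg G v by have := deg_add_nondeg G v; lia.
case: ifP => [/eqP b0 | b_neq0] lt_br n_eq.
  move=> G_reg; exists set0; split => [|v|v w _]; rewrite ?cards0 ?inE ?b0 //.
  by rewrite nondegE /deg G_reg ?inE // mulnBl mul1n /=; nia.
case=> X [cardX cardXC cross regX regXC]; exists X; split => // [v | v w].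
  rewrite nondegE (deg_in_setC G X v); case: (boolP (v \in X)) => vX.
    rewrite regX // deg_in_complete ?cardXC => [|w]; last exact: cross.
    by rewrite !mulnBl mul1n mulnS; nia.
  rewrite regXC ?inE // deg_in_complete ?cardX => [|w wX]; last by rewrite G_sym cross ?inE.
  by rewrite !mulnBl mul1n mulnS; nia.
case: (boolP (v \in X)) => vX; case: (boolP (w \in X)) => wX //.
  by rewrite cross ?inE.
by rewrite G_sym cross ?inE.
Qed.

End FamilyF.

(** * The weights 1 / (mu + nondeg v) *)

Local Open Scope ring_scope.

(* With P = mu + a this says (n - b (a + 1)) / P + b (a + 1) / (P + 1) = 1: the
   weights 1 / (mu + nondeg v) of T_r(n), a = n %/ r, b = n %% r, sum to 1. *)
Definition turan_root (n a b : nat) (mu : algR) :=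
  [/\ 0 <= mu, 0 < mu + a%:R &
     (mu + a%:R) * (mu + a%:R + 1) = n%:R * (mu + a%:R + 1) - (b * a.+1)%:R].

Lemma turan_root_exists (n a b : nat) :
  (2 <= n)%N -> (b * a.+1 <= n)%N -> (a + b <= n)%N -> exists mu, turan_root n a b mu.
Proof.
move=> n_ge2 le_ban le_abn.
pose m : algR := n%:R - (b * a.+1)%:R.
pose D : algR := (n%:R - 1) ^+ 2 + 4 * m.
have m_ge0 : 0 <= m by rewrite subr_ge0 ler_nat.
have D_ge0 : 0 <= D by rewrite addr_ge0 ?sqr_ge0 ?mulr_ge0.
pose s := Num.sqrt D.
have s_ge0 : 0 <= s by rewrite sqrtr_ge0.
have ss : s * s = D by rewrite -expr2 sqr_sqrtr.
have n_ge2R : 2 <= n%:R :> algR by rewrite ler_nat.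
have le_abnR : a%:R + b%:R <= n%:R :> algR by rewrite -natrD ler_nat.
have DE : D - (2 * a%:R - (n%:R - 1)) ^+ 2 = 4 * (a%:R + 1) * (n%:R - a%:R - b%:R).
  by rewrite /D /m natrM; ring.
exists ((n%:R - 1 + s) / 2 - a%:R); rewrite /turan_root subrK; split.
- rewrite subr_ge0 ler_pdivlMr //; nra.
- lra.
- by move: ss; rewrite /D /m; nra.
Qed.

Section Secant.

Variables (a : nat) (mu : algR).
Local Notation P := (mu + a%:R).

(* the gap between x |-> 1 / (mu + x) and its secant through x = a and x = a + 1 *)
Definition secant_gap (c : nat) : algR :=
  (c%:R - a%:R) * (c%:R - a%:R - 1) / ((mu + c%:R) * P * (P + 1)).

Lemma inv_secant (c : nat) : 0 <= mu -> 0 < P -> (0 < c)%N ->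
  (mu + c%:R)^-1 = P^-1 - (c%:R - a%:R) / (P * (P + 1)) + secant_gap c.
Proof.
move=> mu_ge0 P_gt0 c_gt0; have c_ge1 : 1 <= c%:R :> algR by rewrite ler1n.
rewrite /secant_gap; field.
by apply/and3P; split; apply: lt0r_neq0; lra.
Qed.

Lemma secant_gap_ge0 (c : nat) : 0 <= mu -> 0 < P -> (0 < c)%N -> 0 <= secant_gap c.
Proof.
move=> mu_ge0 P_gt0 c_gt0; have c_ge1 : 1 <= c%:R :> algR by rewrite ler1n.
rewrite /secant_gap divr_ge0 //; last by apply: mulr_ge0; [apply: mulr_ge0 |]; lra.
have [le_ca | lt_ac] := leqP c a.
  by move: le_ca; rewrite -(ler_nat algR); nra.
by move: lt_ac; rewrite -(ler_nat algR) -natr1; nra.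
Qed.

Lemma secant_gap_eq0 (c : nat) : 0 <= mu -> 0 < P -> (0 < c)%N ->
  secant_gap c = 0 -> c = a \/ c = a.+1.
Proof.
move=> mu_ge0 P_gt0 c_gt0; have c_ge1 : 1 <= c%:R :> algR by rewrite ler1n.
have muc_gt0 : 0 < mu + c%:R by lra.
have P1_gt0 : 0 < P + 1 by lra.
rewrite /secant_gap => /eqP; rewrite mulf_eq0 invr_eq0 !mulf_eq0.
rewrite (gt_eqF P_gt0) (gt_eqF P1_gt0) (gt_eqF muc_gt0) !orbF.
rewrite subr_eq0 subr_eq add0r subr_eq addrC natr1 !eqr_nat.
by case/orP => /eqP ->; [left | right].
Qed.

Lemma secant_gap_nodes (x : bool) : secant_gap (a + x) = 0.
Proof.
by rewrite /secant_gap natrD addrAC subrr add0r; case: x; rewrite ?subrr ?mulr0 ?mul0r.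
Qed.

Lemma sum_inv_sub1 (n b : nat) (c : 'I_n -> nat) : 0 <= mu -> 0 < P ->
  P * (P + 1) = n%:R * (P + 1) - (b * a.+1)%:R -> (forall v, 0 < c v)%N ->
  \sum_v (mu + (c v)%:R)^-1 - 1 =
  ((n * a + b * a.+1)%:R - (\sum_v c v)%:R) / (P * (P + 1)) + \sum_v secant_gap (c v).
Proof.
move=> mu_ge0 P_gt0 P_eq c_gt0.
rewrite (eq_bigr _ (fun v _ => inv_secant mu_ge0 P_gt0 (c_gt0 v))).
rewrite !big_split /= sumrN -mulr_suml sumrB !sumr_const card_ord natr_sum.
rewrite -[P^-1 *+ n]mulr_natr -[a%:R *+ n]mulr_natr natrD natrM.
have -> : (b * a.+1)%:R = n%:R * (P + 1) - P * (P + 1) :> algR by rewrite P_eq; ring.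
by field; rewrite !lt0r_neq0 //; lra.
Qed.

End Secant.

Lemma adjmx_hermitian n (G : rel 'I_n) : simple_graph G -> adjmx G \is hermsymmx.
Proof.
case=> G_sym _; apply/is_hermitianmxP; rewrite expr0 scale1r.
by apply/matrixP => i j; rewrite !mxE conjC_nat G_sym.
Qed.

Lemma algRval_le (x y : algR) : (algRval x <= algRval y) = (x <= y).
Proof. by []. Qed.

Lemma eq_lambda n (G H : rel 'I_n) : G =2 H -> lambda G = lambda H.
Proof.
move=> GH; rewrite /lambda (_ : adjmx G = adjmx H) //.
by apply/matrixP => i j; rewrite !mxE GH.
Qed.

Section Weights.

Variables (n : nat) (G : rel 'I_n) (mu : algR).

Definition weight v : algR := (mu + (nondeg G v)%:R)^-1.

Local Notation Y := (\sum_v weight v).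

Lemma weight_gt0 v : simple_graph G -> 0 <= mu -> 0 < weight v.
Proof.
move=> G_simple mu_ge0; rewrite invr_gt0.
have : 1 <= (nondeg G v)%:R :> algR by rewrite ler1n nondeg_gt0.
lra.
Qed.

Lemma sum_nonadj w : \sum_v ((~~ G w v)%:R : algR) = (nondeg G w)%:R.
Proof. by rewrite /nondeg -sum_nat_mem natr_sum; apply: eq_bigr => v _; rewrite inE. Qed.

Lemma sum_adj_split (F : 'I_n -> algR) w :
  \sum_v (G w v)%:R * F v = \sum_v F v - \sum_v (~~ G w v)%:R * F v.
Proof.
apply/eqP; rewrite eq_sym subr_eq -big_split; apply/eqP/eq_bigr => v _ /=.
by case: (G w v); rewrite /= ?mul1r ?mul0r ?addr0 ?add0r.
Qed.

Lemma weight_quadratic_form : simple_graph G -> 0 <= mu ->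
  \sum_v \sum_w weight v * (G v w)%:R * weight w - mu * \sum_v weight v ^+ 2 =
  Y * (Y - 1) + (\sum_v \sum_w (~~ G v w)%:R * (weight v - weight w) ^+ 2) / 2.
Proof.
move=> G_simple mu_ge0; have [G_sym _] := G_simple.
set N := \sum_v \sum_w (~~ G v w)%:R * (weight v * weight w).
set C := \sum_v (nondeg G v)%:R * weight v ^+ 2.
have adjE : \sum_v \sum_w weight v * (G v w)%:R * weight w = Y * Y - N.
  rewrite mulr_suml -sumrB; apply: eq_bigr => v _.
  under eq_bigr do rewrite -mulrA.
  rewrite -mulr_sumr sum_adj_split mulrBr mulr_sumr; congr (_ - _).
  by rewrite mulr_sumr; apply: eq_bigr => w _; rewrite mulrCA.
have nonadjE : \sum_v \sum_w (~~ G v w)%:R * (weight v - weight w) ^+ 2 = C + C - 2 * N.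
  have sum_sqr_l : \sum_v \sum_w (~~ G v w)%:R * weight v ^+ 2 = C.
    by apply: eq_bigr => v _; rewrite -mulr_suml sum_nonadj.
  have sum_sqr_r : \sum_v \sum_w (~~ G v w)%:R * weight w ^+ 2 = C.
    rewrite exchange_big; apply: eq_bigr => w _.
    by under eq_bigr do rewrite G_sym; rewrite -mulr_suml sum_nonadj.
  rewrite -{1}sum_sqr_l -sum_sqr_r /N mulr_sumr -!big_split -sumrB; apply: eq_bigr => v _.
  rewrite mulr_sumr -!big_split -sumrB; apply: eq_bigr => w _ /=; ring.
have diagE : mu * \sum_v weight v ^+ 2 + C = Y.
  rewrite mulr_sumr -big_split; apply: eq_bigr => v _ /=.
  have := weight_gt0 v G_simple mu_ge0; rewrite /weight invr_gt0 => pos.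
  by field; rewrite lt0r_neq0.
by rewrite adjE nonadjE -diagE; field.
Qed.

Lemma weight_left_eigen : simple_graph G -> 0 <= mu -> Y = 1 ->
  (forall v w, ~~ G v w -> nondeg G v = nondeg G w) ->
  forall w, \sum_v weight v * (G v w)%:R = mu * weight w.
Proof.
move=> G_simple mu_ge0 Y1 nondeg_nonadj w; have [G_sym _] := G_simple.
transitivity (\sum_v (G w v)%:R * weight v).
  by apply: eq_bigr => v _; rewrite G_sym mulrC.
rewrite sum_adj_split Y1.
transitivity (1 - \sum_v (~~ G w v)%:R * weight w).
  congr (_ - _); apply: eq_bigr => v _.
  by case: (boolP (G w v)) => [_ | /nondeg_nonadj]; rewrite ?mul0r // /weight => ->.
rewrite -mulr_suml sum_nonadj.
have := weight_gt0 w G_simple mu_ge0; rewrite /weight invr_gt0 => pos.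
by field; rewrite lt0r_neq0.
Qed.

Lemma weight_form_ge : simple_graph G -> 0 <= mu -> 1 <= Y ->
  mu * \sum_v weight v ^+ 2 <= \sum_v \sum_w weight v * (G v w)%:R * weight w.
Proof.
move=> G_simple mu_ge0 Y_ge1; rewrite -subr_ge0 weight_quadratic_form //.
apply: addr_ge0; first by apply: mulr_ge0; lra.
rewrite divr_ge0 // sumr_ge0 // => v _; rewrite sumr_ge0 // => w _.
by rewrite mulr_ge0 ?ler0n ?sqr_ge0.
Qed.

Lemma weight_form_eq : simple_graph G -> 0 <= mu -> 1 <= Y ->
  \sum_v \sum_w weight v * (G v w)%:R * weight w <= mu * \sum_v weight v ^+ 2 ->
  Y = 1 /\ forall v w, ~~ G v w -> nondeg G v = nondeg G w.
Proof.
move=> G_simple mu_ge0 Y_ge1; rewrite -subr_le0 weight_quadratic_form //.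
set D := \sum_v _ => form_le0.
have D_terms_ge0 v w : 0 <= (~~ G v w)%:R * (weight v - weight w) ^+ 2.
  by rewrite mulr_ge0 ?ler0n ?sqr_ge0.
have D_ge0 : 0 <= D by rewrite sumr_ge0 // => v _; rewrite sumr_ge0.
have Y_sub1_ge0 : 0 <= Y * (Y - 1) by apply: mulr_ge0; lra.
split.
  have /eqP : Y * (Y - 1) = 0 by lra.
  by rewrite mulf_eq0 subr_eq0 => /orP [/eqP Y0 | /eqP //]; lra.
move=> v w nvw; have D0 : D = 0 by lra.
have Dv0 : \sum_u (~~ G v u)%:R * (weight v - weight u) ^+ 2 = 0.
  by apply: (psumr_eq0P _ D0) => // u _; apply: sumr_ge0.
have := psumr_eq0P (fun u _ => D_terms_ge0 v u) Dv0 (i := w) isT; rewrite nvw mul1r => /eqP.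
by rewrite sqrf_eq0 subr_eq0 => /eqP /invr_inj /addrI /eqP; rewrite eqr_nat => /eqP.
Qed.

Lemma weight_sqr_sum_gt0 : (0 < n)%N -> simple_graph G -> 0 <= mu ->
  0 < \sum_v weight v ^+ 2.
Proof.
move=> n_gt0 G_simple mu_ge0; rewrite (bigD1 (Ordinal n_gt0)) //= ltr_wpDr ?sumr_ge0 //.
  by move=> v _; rewrite sqr_ge0.
by rewrite exprn_gt0 ?weight_gt0.
Qed.

Definition weight_row : 'rV[algC]_n := \row_v algRval (weight v).

Lemma lambda_weight : (0 < n)%N -> simple_graph G -> 0 <= mu -> Y = 1 ->
  (forall v w, ~~ G v w -> nondeg G v = nondeg G w) -> lambda G = algRval mu.
Proof.
move=> n_gt0 G_simple mu_ge0 Y1 nondeg_nonadj.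
apply: (spectral_radius_pos_eigenvector (x := weight_row)) => // [i j | i |].
- by rewrite mxE ler0n.
- by rewrite mxE; apply: weight_gt0.
apply/rowP => w; have := congr1 algRval (weight_left_eigen G_simple mu_ge0 Y1 nondeg_nonadj w).
rewrite rmorphM rmorph_sum !mxE => <-; apply: eq_bigr => v _.
by rewrite !mxE rmorphM rmorph_nat.
Qed.

Local Open Scope sesquilinear_scope.

Lemma weight_rayleigh : simple_graph G ->
  algRval (\sum_v \sum_w weight v * (G v w)%:R * weight w) <=
  lambda G * algRval (\sum_v weight v ^+ 2).
Proof.
move=> G_simple; have := hermitian_rayleigh_le weight_row (adjmx_hermitian G_simple).
have -> : weight_row ^t* = weight_row^T.
  by apply/matrixP => i j; rewrite !mxE conj_Creal // algRvalP.
congr (_ <= _ * _); rewrite !mxE rmorph_sum.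
  under [RHS]eq_bigr do rewrite rmorph_sum.
  rewrite [RHS]exchange_big; apply: eq_bigr => w _; rewrite !mxE mulr_suml.
  by apply: eq_bigr => v _; rewrite !mxE !rmorphM rmorph_nat.
by apply: eq_bigr => v _; rewrite !mxE rmorphXn.
Qed.

End Weights.

Section TuranComparison.

Variables (r n : nat) (G : rel 'I_n) (mu : algR).
Local Notation a := (n %/ r)%N.
Local Notation b := (n %% r)%N.
Local Notation P := (mu + a%:R).
Local Notation Y := (\sum_v weight G mu v).

Lemma weight_sum_sub1 : simple_graph G -> turan_root n a b mu ->
  Y - 1 = ((n * a + b * a.+1)%:R - (\sum_v nondeg G v)%:R) / (P * (P + 1)) +
          \sum_v secant_gap a mu (nondeg G v).
Proof.
by move=> G_simple [mu_ge0 P_gt0 P_eq]; apply: sum_inv_sub1 => // v; apply: nondeg_gt0.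
Qed.

Lemma weight_sum_ge1 : simple_graph G -> turan_root n a b mu ->
  (\sum_v nondeg G v <= n * a + b * a.+1)%N -> 1 <= Y.
Proof.
move=> G_simple root le_K; have [mu_ge0 P_gt0 _] := root.
rewrite -subr_ge0 weight_sum_sub1 // addr_ge0 ?sumr_ge0 // => [|v _].
  by rewrite divr_ge0 ?subr_ge0 ?ler_nat // mulr_ge0 //; lra.
exact/secant_gap_ge0/nondeg_gt0.
Qed.

Lemma weight_sum_eq1 : simple_graph G -> turan_root n a b mu ->
  (\sum_v nondeg G v <= n * a + b * a.+1)%N -> Y = 1 ->
  \sum_v nondeg G v = (n * a + b * a.+1)%N /\ forall v, nondeg G v = a \/ nondeg G v = a.+1.
Proof.
move=> G_simple root le_K Y1; have [mu_ge0 P_gt0 _] := root.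
have := weight_sum_sub1 G_simple root; rewrite Y1 subrr.
set t := _ / _; set gaps := \sum_v _ => t_gaps0.
have gap_ge0 v : 0 <= secant_gap a mu (nondeg G v) by apply/secant_gap_ge0/nondeg_gt0.
have t_ge0 : 0 <= t by rewrite divr_ge0 ?subr_ge0 ?ler_nat // mulr_ge0 //; lra.
have gaps_ge0 : 0 <= gaps by rewrite sumr_ge0.
split.
  have /eqP : t = 0 by lra.
  have P1_gt0 : 0 < P + 1 by lra.
  rewrite mulf_eq0 invr_eq0 mulf_eq0 (gt_eqF P_gt0) (gt_eqF P1_gt0) !orbF.
  by rewrite subr_eq0 eqr_nat => /eqP.
have gaps0 : gaps = 0 by lra.
move=> v; apply: (secant_gap_eq0 mu_ge0 P_gt0 (nondeg_gt0 G_simple v)).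
exact: (psumr_eq0P (fun u _ => gap_ge0 u) gaps0).
Qed.

Lemma mu_le_lambda : (0 < n)%N -> simple_graph G -> turan_root n a b mu ->
  (\sum_v nondeg G v <= n * a + b * a.+1)%N -> algRval mu <= lambda G.
Proof.
move=> n_gt0 G_simple root le_K; have [mu_ge0 _ _] := root.
have Q_gt0 := weight_sqr_sum_gt0 n_gt0 G_simple mu_ge0.
have form_ge := weight_form_ge G_simple mu_ge0 (weight_sum_ge1 G_simple root le_K).
rewrite -(ler_pM2r (Q_gt0 : 0 < algRval _)) -rmorphM.
by apply: le_trans (weight_rayleigh mu G_simple); exact: form_ge.
Qed.

Lemma lambda_eq_nondeg_profile : (0 < n)%N -> simple_graph G -> turan_root n a b mu ->
  (\sum_v nondeg G v <= n * a + b * a.+1)%N -> lambda G = algRval mu ->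
  exists X, nondeg_profile r G X.
Proof.
move=> n_gt0 G_simple root le_K lambdaE; have [mu_ge0 _ _] := root.
have := weight_rayleigh mu G_simple; rewrite lambdaE -rmorphM algRval_le => form_le.
have Y_ge1 := weight_sum_ge1 G_simple root le_K.
have [Y1 nondeg_nonadj] := weight_form_eq G_simple mu_ge0 Y_ge1 form_le.
have [sumE nondeg_ab] := weight_sum_eq1 G_simple root le_K Y1.
by eexists; apply: nondeg_profile_of.
Qed.

Lemma nondeg_profile_lambda X : (0 < n)%N -> simple_graph G -> turan_root n a b mu ->
  nondeg_profile r G X -> lambda G = algRval mu.
Proof.
move=> n_gt0 G_simple root profile; have [mu_ge0 _ _] := root.
have [_ nondegE sideE] := profile.
apply: lambda_weight => // [|v w /sideE]; last by rewrite !nondegE => ->.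
apply/eqP; rewrite -subr_eq0 weight_sum_sub1 // (sum_nondeg_profile profile) subrr mul0r add0r.
by rewrite big1 // => v _; rewrite nondegE secant_gap_nodes.
Qed.

End TuranComparison.

Theorem theorem1p7 (r n : nat) (G : rel 'I_n) :
  (2 <= r)%N -> simple_graph G ->
  [/\ (nedges (turan r n) <= nedges G)%N -> lambda (turan r n) <= lambda G,
      (nedges (turan r n) <= nedges G)%N -> lambda G = lambda (turan r n) ->
        family_F r G &
      family_F r G -> nedges G = nedges (turan r n) /\ lambda G = lambda (turan r n)].
Proof.
move=> r_ge2 G_simple; have r_gt0 : (0 < r)%N by lia.
have T_simple := turan_simple r n; have T_profile := turan_nondeg_profile n r_gt0.
have [n_le1 | n_gt1] := leqP n 1.
  have TG := simple_graph_le1_eq2 n_le1 T_simple G_simple.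
  rewrite -(eq_nedges TG) -(eq_lambda TG); split => // _ _.
  exact: nondeg_profile_family_F r_gt0 G_simple _ (eq_nondeg_profile TG T_profile).
have [mu mu_root] : exists mu, turan_root n (n %/ r) (n %% r) mu.
  have := divn_eq n r; have := ltn_pmod n r_gt0.
  by move: (n %/ r)%N (n %% r)%N => a b lt_br n_eq; apply: turan_root_exists; nia.
have n_gt0 : (0 < n)%N by lia.
have lambdaT := nondeg_profile_lambda n_gt0 T_simple mu_root T_profile.
rewrite lambdaT (leq_nedges_sum_nondeg G_simple T_simple) (sum_nondeg_profile T_profile).
split => [le_K | le_K lambdaE | /(family_F_nondeg_profile r_gt0 G_simple) [X G_profile]].
- exact: mu_le_lambda n_gt0 G_simple mu_root le_K.
- have [X G_profile] := lambda_eq_nondeg_profile n_gt0 G_simple mu_root le_K lambdaE.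
  exact: nondeg_profile_family_F G_profile.
split; last exact: nondeg_profile_lambda G_profile.
apply/eqP; rewrite eqn_leq (leq_nedges_sum_nondeg G_simple T_simple).
rewrite (leq_nedges_sum_nondeg T_simple G_simple).
by rewrite (sum_nondeg_profile G_profile) (sum_nondeg_profile T_profile) leqnn.
Qed.
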